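(* Let $(G,\alpha)$ be a finite Hom-group and $H\preceq G$. For all $x,y\in G$, if $xH\cap yH\neq\emptyset$ then $xH=yH$, where $gH=\{gh:h\in H\}$.
   Context: A Hom-group is a tuple $(G,\mu,1,\alpha)$ where $G$ is a set, $\mu:G\times G\to G$ is a binary operation written $\mu(g,h)=gh$, $1\in G$ is a distinguished element, and $\alpha:G\to G$ is a bijection, such that: (1) Hom-associativity: $\alpha(g)(hk)=(gh)\alpha(k)$ for all $g,h,k\in G$; (2) $\alpha(gk)=\alpha(g)\alpha(k)$ for all $g,k$; (3) Hom-unitality: $g1=1g=\alpha(g)$ for all $g$, and $\alpha(1)=1$; (4) for every $g\in G$ there exists $g^{-1}\in G$ with $gg^{-1}=g^{-1}g=1$ (such an inverse is unique). A Hom-subgroup of $(G,\alpha)$ is a subset $H\subseteq G$ such that $H$, with the restriction of the multiplication of $G$, the element $1$, and the restriction of $\alpha$, is itself a Hom-group (in particular $1\in H$, $H$ is closed under multiplication and inverses, and $\alpha$ restricts to a bijection $H\to H$). We write $H\preceq G$. *)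

From mathcomp Require Import all_boot.
Set Implicit Arguments. Unset Strict Implicit. Unset Printing Implicit Defensive.

Record is_HomGroup (G : Type) (mu : G -> G -> G) (e : G) (alpha : G -> G)
  : Prop := {
  hg_bij : bijective alpha;
  hg_assoc : forall g h k, mu (alpha g) (mu h k) = mu (mu g h) (alpha k);
  hg_morph : forall g k, alpha (mu g k) = mu (alpha g) (alpha k);
  hg_unitr : forall g, mu g e = alpha g;
  hg_unitl : forall g, mu e g = alpha g;
  hg_alpha1 : alpha e = e;
  hg_inv : forall g, exists g', mu g g' = e /\ mu g' g = e
}.

(* H is a Hom-subgroup of (G, mu, e, alpha): with the restricted operations,
   e, and the restricted alpha, H is itself a Hom-group.  Axioms (1)-(3) are
   inherited from G, so this amounts to: e \in H, closure under mu, alpha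
   restricting to a bijection H -> H, and inverses (taken in H). *)
Record is_HomSubgroup (G : finType) (mu : G -> G -> G) (e : G) (alpha : G -> G)
  (H : {set G}) : Prop := {
  hs_one : e \in H;
  hs_mul : forall g h, g \in H -> h \in H -> mu g h \in H;
  hs_alpha : forall h, h \in H -> alpha h \in H;
  hs_alpha_onto : forall h, h \in H -> exists2 h', h' \in H & alpha h' = h;
  hs_alpha_inj : {in H &, injective alpha};
  hs_inv : forall g, g \in H -> exists2 g', g' \in H & mu g g' = e /\ mu g' g = e
}.

Definition lcoset (G : finType) (mu : G -> G -> G) (g : G) (H : {set G})
  : {set G} := [set mu g h | h in H].

From mathcomp Require Import all_boot.
Set Implicit Arguments.

(* Left translation by an element of a Hom-group is injective, so on the
   finite set H translation by h \in H is a bijection of H.  If x h1 = y h2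
   with h1, h2 \in H, write alpha t (t \in H) as h1 h'; Hom-associativity
   rebrackets alpha (x t) = alpha x (h1 h') = (x h1) alpha h' = (y h2) alpha h'
   = alpha (y s) with alpha s = h2 h', and injectivity of alpha gives
   x t = y s \in yH. *)

Section HomGroupCosets.

Variables (G : finType) (mu : G -> G -> G) (e : G) (alpha : G -> G).
Hypothesis hG : is_HomGroup mu e alpha.

Lemma hom_mulI g : injective (mu g).
Proof.
move=> a b eq_ab.
have [g' [_ g'g]] := hg_inv hG g.
have alphaI := bij_inj (hg_bij hG).
apply: (alphaI); apply: (alphaI).
rewrite -[alpha (alpha a)](hg_unitl hG) -[alpha (alpha b)](hg_unitl hG) -g'g.
by rewrite -!(hg_assoc hG) eq_ab.
Qed.

Variable H : {set G}.
Hypothesis hH : is_HomSubgroup mu e alpha H.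

Lemma lcoset_id h : h \in H -> lcoset mu h H = H.
Proof.
move=> hH_h; apply/eqP; rewrite eqEcard card_in_imset; last first.
  by move=> a b _ _; apply: hom_mulI.
rewrite leqnn andbT; apply/subsetP=> _ /imsetP [h' h'H ->].
exact: (hs_mul hH).
Qed.

Lemma lcoset_subset {x y h1 h2} : h1 \in H -> h2 \in H -> mu x h1 = mu y h2 ->
  lcoset mu x H \subset lcoset mu y H.
Proof.
move=> h1H h2H exy; apply/subsetP=> _ /imsetP [t tH ->].
have : alpha t \in lcoset mu h1 H by rewrite lcoset_id // (hs_alpha hH).
case/imsetP=> h' h'H alpha_t.
have [s sH alpha_s] := hs_alpha_onto hH (hs_mul hH h2H h'H).
have : alpha (mu x t) = alpha (mu y s).
  by rewrite !(hg_morph hG) alpha_t alpha_s (hg_assoc hG) exy -(hg_assoc hG).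
by move/(bij_inj (hg_bij hG))=> ->; apply/imsetP; exists s.
Qed.

End HomGroupCosets.

Theorem mainTheorem7 (G : finType) (mu : G -> G -> G) (e : G) (alpha : G -> G)
  (hG : is_HomGroup mu e alpha) (H : {set G}) (hH : is_HomSubgroup mu e alpha H) :
  forall x y : G, lcoset mu x H :&: lcoset mu y H != set0 ->
    lcoset mu x H = lcoset mu y H.
Proof.
move=> x y /set0Pn [_ /setIP [/imsetP [h1 h1H ->] /imsetP [h2 h2H e12]]].
apply/eqP; rewrite eqEsubset.
by rewrite (lcoset_subset hG hH h1H h2H e12)
  (lcoset_subset hG hH h2H h1H (esym e12)).
Qed.
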